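(* For every $0<\epsilon<1$ and every integer $m\ge2$ there exists a scheduling game on $m$ identical machines of speed $1$ with a global priority list, in which every job has negative deterioration $p_i(t)=\max\{\tau_i,b_i-a_it\}$ with $0\le a_i\le1$, having a pure Nash equilibrium $\sigma$ with $C_{\max}(\sigma)\ge\left(3-\frac2m-\epsilon\right)OPT(G)$. Hence the bound $3-\frac2m$ on the price of anarchy of this class is tight.
   Context: Scheduling game: a finite set $N$ of $n$ jobs (players) and a set $M$ of $m$ machines; machine $j$ has speed $s_j>0$. With a global priority list, all machines share the same bijection $\pi:N\to\{1,\dots,n\}$, and job $u$ has higher priority than $v$ iff $\pi(u)<\pi(v)$. Negative deterioration: $p_i(t)=\max\{\tau_i,b_i-a_it\}$ with $b_i,a_i\ge0$, $\tau_i>0$ ($a_i=0$ gives a fixed-length job). A profile $\sigma\in M^N$ assigns each job to a machine. On machine $j$, the jobs assigned to it, listed in increasing $\pi$-order as $i_1,i_2,\dots$, are processed without idle time: $S_{i_1}(\sigma)=0$, $C_{i_k}(\sigma)=S_{i_k}(\sigma)+p_{i_k}(S_{i_k}(\sigma))/s_j$, $S_{i_{k+1}}(\sigma)=C_{i_k}(\sigma)$. The cost of job $i$ is $C_i(\sigma)$. A pure Nash equilibrium (NE) is a profile in which no job can strictly decrease its completion time by unilaterally changing its machine. Makespan $C_{\max}(\sigma)=\max_iC_i(\sigma)$; $OPT(G)=\min_\sigma C_{\max}(\sigma)$ over all profiles. *)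

From HB Require Import structures.
From mathcomp Require Import all_boot all_order all_algebra all_fingroup.
From mathcomp Require Import reals.
Set Implicit Arguments. Unset Strict Implicit. Unset Printing Implicit Defensive.
Import Order.TTheory GRing.Theory Num.Theory.
Local Open Scope ring_scope.

(* A scheduling game with n jobs ('I_n) and m machines ('I_m), a global
   priority list pi (job u before v iff pi u < pi v), and negatively
   deteriorating jobs p_i(t) = max(tau_i, b_i - a_i t). *)
Record game (R : realType) (n m : nat) := Game {
  tau : 'I_n -> R;
  bb : 'I_n -> R;
  aa : 'I_n -> R;
  prio : {perm 'I_n};
  speed : 'I_m -> R
}.

Section Sched.
Variables (R : realType) (n m : nat) (G : game R n m).

Definition proc (i : 'I_n) (t : R) : R := Num.max (tau G i) (bb G i - aa G i * t).

Definition job_order : seq 'I_n := [seq (prio G)^-1%g k | k <- enum 'I_n].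

Definition machine_jobs (sigma : {ffun 'I_n -> 'I_m}) (j : 'I_m) : seq 'I_n :=
  [seq i <- job_order | sigma i == j].

Fixpoint run (s t : R) (l : seq 'I_n) : R :=
  match l with
  | [::] => t
  | i :: l' => run s (t + proc i t / s) l'
  end.

Definition completion (sigma : {ffun 'I_n -> 'I_m}) (i : 'I_n) : R :=
  let L := machine_jobs sigma (sigma i) in
  run (speed G (sigma i)) 0 (take (index i L).+1 L).

Definition makespan (sigma : {ffun 'I_n -> 'I_m}) : R :=
  \big[Num.max/0]_(i < n) completion sigma i.

Definition deviate (sigma : {ffun 'I_n -> 'I_m}) (i : 'I_n) (j : 'I_m)
  : {ffun 'I_n -> 'I_m} := [ffun k => if k == i then j else sigma k].

Definition is_NE (sigma : {ffun 'I_n -> 'I_m}) : Prop :=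
  forall (i : 'I_n) (j : 'I_m), completion sigma i <= completion (deviate sigma i j) i.

Definition is_OPT (v : R) : Prop :=
  (exists sigma, makespan sigma = v) /\ (forall sigma, v <= makespan sigma).

End Sched.

From HB Require Import structures.
From mathcomp Require Import all_boot all_order all_algebra all_fingroup.
From mathcomp Require Import reals.
From mathcomp Require Import ring lra zify.
Set Implicit Arguments. Unset Strict Implicit. Unset Printing Implicit Defensive.
Import Order.TTheory GRing.Theory Num.Theory.
Local Open Scope ring_scope.

(* Tight instance with identity priorities and N = m(m-1)+1 jobs: first m
   deteriorating jobs with p(t) = max(delta, 1 - t), then m(m-2) jobs of fixed
   length 1/m, last one job of length 1.  Under the round-robin profile
   (job k on machine k mod m) every machine starts with a deteriorating job that
   ends at time 1 and the fixed jobs are spread evenly, so a fixed job never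
   finds a machine with less work ahead of it; the last job waits behind m-2
   short jobs and ends at 3 - 2/m.  Putting job k on machine k / m instead, the
   deteriorating jobs share machine 0, where all but the first shrink to delta,
   and every other machine carries m short jobs or the long job alone, so
   OPT <= 1 + eps/3. *)

Section FilterSortedOrd.
Variable n : nat.
Local Notation ord_ltn := (relpre (@nat_of_ord n) ltn).

Lemma sorted_enum_ord_ltn : sorted ord_ltn (enum 'I_n).
Proof. by rewrite -sorted_map val_enum_ord iota_ltn_sorted. Qed.

Lemma take_index_filter (P : pred 'I_n) (s : seq 'I_n) i :
  sorted ord_ltn s -> i \in s -> P i ->
  take (index i (filter P s)) (filter P s) = [seq k <- s | P k && (k < i)%N].
Proof.
have ltn_tr : transitive ord_ltn := relpre_trans ltn_trans.
elim: s => [//|x s IH] /= Hs; rewrite inE => /orP [/eqP ->|Hi] Pi.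
  rewrite Pi /= eqxx ltnn /=.
  have /allP x_min := order_path_min ltn_tr Hs.
  rewrite (@eq_in_filter _ _ pred0) ?filter_pred0 // => k /x_min /=.
  by rewrite andbC => /ltnW; rewrite leqNgt => /negbTE ->.
have Hxi : (x < i)%N by have /allP := order_path_min ltn_tr Hs; apply.
case Px: (P x) => /=; last exact: IH (path_sorted Hs) Hi Pi.
have -> : (x == i) = false by apply/negbTE; rewrite neq_ltn Hxi.
by rewrite /= Hxi (IH (path_sorted Hs) Hi Pi).
Qed.

Lemma filter_min_cons (P : pred 'I_n) (s : seq 'I_n) j :
  sorted ord_ltn s -> j \in s -> P j -> (forall k, k \in s -> P k -> (j <= k)%N) ->
  filter P s = j :: [seq k <- s | P k && (k != j)].
Proof.
have ltn_tr : transitive ord_ltn := relpre_trans ltn_trans.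
elim: s => [//|x s IH] /= Hs; rewrite inE => /orP [/eqP Ejx|Hj] Pj j_min.
  subst j; rewrite Pj eqxx /=; congr (_ :: _); apply: eq_in_filter => k Hk.
  have /allP /(_ k Hk) /= Hxk := order_path_min ltn_tr Hs.
  by rewrite neq_ltn Hxk orbT andbT.
have Hxj : (x < j)%N by have /allP := order_path_min ltn_tr Hs; apply.
have -> /= : P x = false.
  by apply/negbTE/negP => /(j_min x (mem_head _ _)); rewrite leqNgt Hxj.
by apply: IH (path_sorted Hs) Hj Pj _ => k Hk; apply: j_min; rewrite inE Hk orbT.
Qed.

End FilterSortedOrd.

Section UnitSpeedIdentityPriority.
Variables (R : realType) (n m : nat) (G : game R n m).

Lemma run_rcons s t l x :
  run G s t (rcons l x) = run G s t l + proc G x (run G s t l) / s.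
Proof. by elim: l t => [|y l IH] t //=. Qed.

Lemma run_const l c t : (forall x, x \in l -> forall u, proc G x u = c) ->
  run G 1 t l = t + (size l)%:R * c.
Proof.
elim: l t => [|x l IH] t proc_c /=; first by rewrite mul0r addr0.
rewrite IH => [|y Hy]; last by apply: proc_c; rewrite inE Hy orbT.
rewrite proc_c ?mem_head // divr1 -add1n natrD; ring.
Qed.

Lemma run_le_max l d t : 0 <= d ->
  (forall x, x \in l -> forall u, proc G x u <= Num.max d (1 - u)) ->
  run G 1 t l <= Num.max t 1 + (size l)%:R * d.
Proof.
move=> d_ge0; elim: l t => [|x l IH] t proc_le /=.
  by rewrite mul0r addr0 le_max lexx.
apply: le_trans (IH _ _) _ => [y Hy|]; first by apply: proc_le; rewrite inE Hy orbT.
rewrite divr1 -add1n natrD mulrDl mul1r addrA lerD2r.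
have := proc_le x (mem_head _ _) t; rewrite !maxEle.
by case: (lerP t 1) => ?; do 2?case: ifP => ?; lra.
Qed.

Definition earlier_on (sigma : {ffun 'I_n -> 'I_m}) (i : 'I_n) : seq 'I_n :=
  [seq k <- enum 'I_n | (sigma k == sigma i) && (k < i)%N].

Hypothesis prio1 : prio G = 1%g.
Hypothesis speed1 : forall j, speed G j = 1.

Lemma job_orderE : job_order G = enum 'I_n.
Proof.
by rewrite /job_order prio1 invg1 -[RHS]map_id; apply: eq_map => k; rewrite perm1.
Qed.

Definition start_time sigma i := run G 1 0 (earlier_on sigma i).

Lemma completionE sigma i :
  completion G sigma i = start_time sigma i + proc G i (start_time sigma i).
Proof.
rewrite /completion /machine_jobs job_orderE speed1.
set L := filter _ _; have iL : i \in L by rewrite mem_filter eqxx mem_enum.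
rewrite (take_nth i) ?index_mem // nth_index // run_rcons divr1.
by rewrite take_index_filter ?mem_enum ?sorted_enum_ord_ltn.
Qed.

End UnitSpeedIdentityPriority.

Lemma completion_le_makespan (R : realType) n m (G : game R n m) sigma i :
  completion G sigma i <= makespan G sigma.
Proof. exact: (le_bigmax _ (completion G sigma) i). Qed.

Lemma exists_OPT (R : realType) n m (G : game R n m) (sigma0 : {ffun 'I_n -> 'I_m}) :
  exists opt, is_OPT G opt /\ opt <= makespan G sigma0.
Proof.
case: (@arg_minP _ _ _ sigma0 xpredT (makespan G) isT) => s _ s_min.
by exists (makespan G s); split; [split; [exists s | move=> ?; apply: s_min] | apply: s_min].
Qed.

Section TightInstance.
Variables (R : realType) (m : nat) (eps : R).
Hypothesis m_ge2 : (2 <= m)%N.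

Local Notation N := (m * (m - 1)).+1.

Lemma m_gt0 : (0 < m)%N. Proof. exact: ltnW m_ge2. Qed.

Definition is_det (k : 'I_N) := (k < m)%N.
Definition is_long (k : 'I_N) := (k == m * (m - 1) :> nat)%N.

Definition sigma_rr : {ffun 'I_N -> 'I_m} :=
  [ffun k : 'I_N => Ordinal (ltn_pmod k m_gt0)].

Lemma sigma_rrE k : sigma_rr k = (k %% m)%N :> nat.
Proof. by rewrite ffunE. Qed.

Lemma block_lt (k : 'I_N) : (k %/ m < m)%N.
Proof. by rewrite ltn_divLR ?m_gt0 //; have := ltn_ord k; nia. Qed.

Definition sigma_blk : {ffun 'I_N -> 'I_m} :=
  [ffun k : 'I_N => Ordinal (block_lt k)].

Lemma sigma_blkE k : sigma_blk k = (k %/ m)%N :> nat.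
Proof. by rewrite ffunE. Qed.

Hypotheses (eps_gt0 : 0 < eps) (eps_lt1 : eps < 1).

Definition delta : R := eps / (3 * (N.+1)%:R).
Definition fixed_len (k : 'I_N) : R := if is_long k then 1 else (m%:R)^-1.

Definition inst : game R N m :=
  Game (fun k => if is_det k then delta else fixed_len k)
       (fun k => if is_det k then 1 else fixed_len k)
       (fun k => if is_det k then 1 else 0) 1%g (fun _ => 1).

Lemma delta_gt0 : 0 < delta.
Proof. by rewrite divr_gt0 // mulr_gt0 // ltr0n. Qed.

Lemma delta_le1 : delta <= 1.
Proof.
rewrite ler_pdivrMr ?mulr_gt0 ?ltr0n // mul1r.
have : 1 <= (N.+1)%:R :> R by rewrite ler1n.
have := eps_lt1; move: (_%:R) => X ? ?; lra.
Qed.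

Lemma natS_delta : (N.+1)%:R * delta = eps / 3.
Proof. by rewrite /delta; field; rewrite -natrM -natrD pnatr_eq0. Qed.

Lemma fixed_len_gt0 k : 0 < fixed_len k.
Proof. by rewrite /fixed_len; case: ifP; rewrite ?ltr01 // invr_gt0 ltr0n m_gt0. Qed.

Lemma inst_params k : [/\ 0 < tau inst k, 0 <= bb inst k & 0 <= aa inst k <= 1].
Proof.
rewrite /=; case: ifP => _; rewrite ?lexx ?ler01 ?delta_gt0 //.
by split; rewrite ?lexx ?ler01 ?fixed_len_gt0 ?(ltW (fixed_len_gt0 k)).
Qed.

Lemma proc_det k u : is_det k -> proc inst k u = Num.max delta (1 - u).
Proof. by rewrite /proc /= => ->; rewrite mul1r. Qed.

Lemma proc_fixed k u : ~~ is_det k -> proc inst k u = fixed_len k.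
Proof. by rewrite /proc /= => /negbTE ->; rewrite mul0r subr0 maxxx. Qed.

Lemma max_delta_1 : Num.max delta (1 - 0) = 1.
Proof. by rewrite subr0 maxEle delta_le1. Qed.

Lemma completion_det_ge1 sigma i : is_det i -> 1 <= completion inst sigma i.
Proof.
move=> det_i; rewrite completionE // /start_time proc_det //.
set u := run _ _ _ _; have : 1 - u <= Num.max delta (1 - u) by rewrite le_max lexx orbT.
lra.
Qed.

Lemma completion_rr_det i : is_det i -> completion inst sigma_rr i = 1.
Proof.
move=> det_i; rewrite completionE // /start_time /earlier_on.
rewrite (@eq_in_filter _ _ pred0) ?filter_pred0 /=; first by rewrite add0r proc_det // max_delta_1.
move=> k _ /=; apply/negbTE/negP => /andP [/eqP /(congr1 val) /= + k_lt].
have k_lt_m : (k < m)%N by apply: ltn_trans det_i.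
by rewrite !sigma_rrE !modn_small // => /val_inj eq_ki; rewrite eq_ki ltnn in k_lt.
Qed.

Definition det_job (c : 'I_m) : 'I_N := inord c.

Lemma det_jobE c : det_job c = c :> nat.
Proof. by rewrite inordK //; have := ltn_ord c; lia. Qed.

Definition earlier_short (sigma : {ffun 'I_N -> 'I_m}) (i : 'I_N) :=
  [seq k <- enum 'I_N | ((sigma k == sigma i) && (k < i)%N) && (k != det_job (sigma i))].

Definition residue_jobs (c q : nat) : seq 'I_N :=
  [seq inord (t.+1 * m + c) | t <- iota 0 (q - 1)].

Lemma size_residue_jobs c q : size (residue_jobs c q) = (q - 1)%N.
Proof. by rewrite size_map size_iota. Qed.

Lemma residue_job_lt (i : 'I_N) t c :
  (c < m)%N -> (t < i %/ m - 1)%N -> (t.+1 * m + c < i)%N.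
Proof. by move=> c_lt t_lt; have := leq_divM i m; nia. Qed.

Lemma earlier_short_rr_size_le i :
  ~~ is_det i -> (size (earlier_short sigma_rr i) <= i %/ m - 1)%N.
Proof.
move=> fixed_i; rewrite -(size_residue_jobs (sigma_rr i) (i %/ m)).
apply: uniq_leq_size; first by rewrite filter_uniq ?enum_uniq.
move=> x; rewrite mem_filter => /andP [/andP [/andP [/eqP same_x x_lt] x_ndet] _].
have x_mod : (x %% m)%N = (i %% m)%N by rewrite -!sigma_rrE same_x.
have x_ndet' : (x : nat) != (i %% m)%N.
  by apply: contra x_ndet => /eqP x_eq; apply/eqP/ord_inj; rewrite det_jobE sigma_rrE.
have x_div := divn_eq x m; have i_div := divn_eq i m.
have x_q_gt0 : (0 < x %/ m)%N.
  rewrite lt0n; apply: contra x_ndet' => /eqP x_q0.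
  by rewrite -x_mod {1}x_div x_q0.
have x_q_lt : (x %/ m < i %/ m)%N.
  by rewrite -(ltn_pmul2r m_gt0); move: x_lt; rewrite {1}x_div {1}i_div x_mod; lia.
apply/mapP; exists (x %/ m - 1)%N; first by rewrite mem_iota; lia.
have -> : (x %/ m - 1).+1 = (x %/ m)%N by lia.
by apply/ord_inj; rewrite sigma_rrE -x_mod -divn_eq inordK.
Qed.

Section FixedJobDeviation.
Variables (sigma : {ffun 'I_N -> 'I_m}) (i : 'I_N).
Hypotheses (sigma_i : forall k, k != i -> sigma k = sigma_rr k) (fixed_i : ~~ is_det i).

Lemma det_job_earlier : det_job (sigma i) \in earlier_on sigma i.
Proof.
have i_ge : (m <= i)%N by rewrite leqNgt.
have det_lt : (det_job (sigma i) < i)%N by rewrite det_jobE; have := ltn_ord (sigma i); lia.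
rewrite mem_filter mem_enum andbT det_lt andbT sigma_i ?neq_ltn ?det_lt //.
by apply/eqP/ord_inj; rewrite sigma_rrE det_jobE modn_small.
Qed.

Lemma earlier_short_fixed x :
  x \in earlier_short sigma i -> forall u, proc inst x u = (m%:R)^-1.
Proof.
rewrite mem_filter => /andP [/andP [/andP [/eqP same_x x_lt] x_ndet] _] u.
have x_rr : sigma x = sigma_rr x by rewrite sigma_i // neq_ltn x_lt.
rewrite proc_fixed /fixed_len.
  by rewrite /is_long ifF //; apply/negbTE; have := ltn_ord i; lia.
apply: contra x_ndet => det_x; apply/eqP/ord_inj.
by rewrite det_jobE -same_x x_rr sigma_rrE modn_small.
Qed.

Lemma completion_fixed :
  completion inst sigma i =
  1 + (size (earlier_short sigma i))%:R * (m%:R)^-1 + fixed_len i.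
Proof.
rewrite completionE // /start_time /earlier_on (@filter_min_cons _ _ _ (det_job (sigma i))).
- rewrite /= proc_det ?divr1 ?add0r ?max_delta_1; last by rewrite /is_det det_jobE.
  by rewrite (run_const _ earlier_short_fixed) proc_fixed.
- exact: sorted_enum_ord_ltn.
- by rewrite mem_enum.
- by have := det_job_earlier; rewrite mem_filter => /andP [].
move=> k _ /andP [/eqP same_k k_lt].
by rewrite det_jobE -same_k sigma_i ?neq_ltn ?k_lt // sigma_rrE leq_mod.
Qed.

Lemma earlier_short_size_ge : (i %/ m - 1 <= size (earlier_short sigma i))%N.
Proof.
rewrite -(size_residue_jobs (sigma i) (i %/ m)); apply: uniq_leq_size.
  rewrite map_inj_in_uniq ?iota_uniq // => t1 t2; rewrite !mem_iota !add0n.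
  move=> /andP [_ t1_lt] /andP [_ t2_lt] /(congr1 val).
  have c_lt := ltn_ord (sigma i).
  have := residue_job_lt c_lt t1_lt; have := residue_job_lt c_lt t2_lt.
  move=> lt2 lt1; have i_lt := ltn_ord i; rewrite /= !inordK; try lia.
  by move=> /addIn /eqP; rewrite eqn_pmul2r ?m_gt0 // eqSS => /eqP.
move=> x /mapP [t]; rewrite mem_iota add0n => /andP [_ t_lt] ->.
have c_lt := ltn_ord (sigma i); have x_lt := residue_job_lt c_lt t_lt.
have xE : (inord (t.+1 * m + sigma i) : 'I_N) = t.+1 * m + sigma i :> nat.
  by rewrite inordK //; have := ltn_ord i; lia.
rewrite mem_filter mem_enum andbT xE x_lt andbT; apply/andP; split.
  rewrite sigma_i; last by apply/eqP => /(congr1 (@nat_of_ord N)); rewrite xE; lia.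
  by apply/eqP/ord_inj; rewrite sigma_rrE xE modnMDl modn_small.
by apply/eqP => /(congr1 (@nat_of_ord N)); rewrite xE det_jobE; nia.
Qed.

End FixedJobDeviation.

Lemma sigma_rr_NE : is_NE inst sigma_rr.
Proof.
move=> i j; case: (boolP (is_det i)) => [det_i | fixed_i].
  by rewrite completion_rr_det //; exact: completion_det_ge1.
have dev_i k : k != i -> deviate sigma_rr i j k = sigma_rr k.
  by move=> /negbTE k_ni; rewrite ffunE k_ni.
rewrite !completion_fixed // lerD2r lerD2l ler_wpM2r ?invr_ge0 ?ler0n // ler_nat.
exact: leq_trans (earlier_short_rr_size_le fixed_i) (earlier_short_size_ge dev_i fixed_i).
Qed.

Definition long_job : 'I_N := ord_max.

Lemma long_job_fixed : ~~ is_det long_job.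
Proof. by rewrite /is_det /= -leqNgt; nia. Qed.

Lemma fixed_len_long : fixed_len long_job = 1.
Proof. by rewrite /fixed_len /is_long /= eqxx. Qed.

Lemma makespan_rr_ge : 3 - 2 / m%:R <= makespan inst sigma_rr.
Proof.
apply: le_trans (completion_le_makespan _ _ long_job).
rewrite completion_fixed // ?long_job_fixed // fixed_len_long.
have := earlier_short_size_ge (fun _ _ => erefl) long_job_fixed.
rewrite /= mulKn ?m_gt0 // -subnDA -(ler_nat R) natrB; last by lia.
have m_ge2R : 2 <= m%:R :> R by rewrite (ler_nat R 2 m).
have -> : 3 - 2 / m%:R = 1 + (m%:R - (1 + 1)%:R) * (m%:R)^-1 + 1 :> R.
  by field; rewrite pnatr_eq0 -lt0n m_gt0.
by move=> size_ge; rewrite lerD2r lerD2l ler_wpM2r // invr_ge0 ler0n.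
Qed.

Lemma earlier_blkP i x :
  x \in earlier_on sigma_blk i -> (x %/ m = i %/ m)%N /\ (x < i)%N.
Proof.
by rewrite mem_filter => /andP [/andP [/eqP /(congr1 val) /=]]; rewrite !sigma_blkE.
Qed.

Lemma size_earlier_blk i : ((size (earlier_on sigma_blk i)).+1 <= m)%N.
Proof.
set block := [seq inord (i %/ m * m + t) : 'I_N | t <- iota 0 m].
suff : (size (rcons (earlier_on sigma_blk i) i) <= size block)%N.
  by rewrite size_rcons size_map size_iota.
apply: uniq_leq_size.
  rewrite rcons_uniq filter_uniq ?enum_uniq // andbT.
  by apply/negP => /earlier_blkP []; rewrite ltnn.
have in_block (x : 'I_N) : (x %/ m = i %/ m)%N -> x \in block.
  move=> same_x; apply/mapP; exists (x %% m)%N; first by rewrite mem_iota ltn_mod m_gt0.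
  by apply/ord_inj; rewrite -same_x -divn_eq inordK.
by move=> x; rewrite mem_rcons inE => /orP [/eqP -> | /earlier_blkP []]; auto.
Qed.

Lemma completion_blk_det i :
  is_det i -> completion inst sigma_blk i <= 1 + eps / 3.
Proof.
move=> det_i; rewrite completionE // proc_det //.
have : start_time inst sigma_blk i <=
       Num.max 0 1 + (size (earlier_on sigma_blk i))%:R * delta.
  apply: run_le_max (ltW delta_gt0) _ => x /earlier_blkP [same_x _] u.
  by rewrite proc_det // /is_det ltnNge -(divn_gt0 _ m_gt0) same_x divn_small.
rewrite maxEle ler01 => run_le.
have size_le : (size (earlier_on sigma_blk i)).+1%:R * delta <= eps / 3.
  rewrite -natS_delta ler_wpM2r ?(ltW delta_gt0) // ler_nat.
  by apply: leq_trans (size_earlier_blk i) _; lia.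
move: run_le size_le; rewrite -natr1 mulrDl mul1r maxEle.
by case: ifP; move: (start_time _ _ _) (_ * delta) eps_gt0 => u s e0; lra.
Qed.

Lemma completion_blk_long : completion inst sigma_blk long_job = 1.
Proof.
rewrite completionE // /start_time proc_fixed ?long_job_fixed // fixed_len_long.
suff -> : earlier_on sigma_blk long_job = [::] by rewrite add0r.
case: (earlier_on _ _) (@earlier_blkP long_job) => [//|x l] /(_ x (mem_head _ _)).
rewrite /= mulKn ?m_gt0 // => -[same_x x_lt].
by have := leq_divM x m; rewrite same_x; lia.
Qed.

Lemma completion_blk_short i :
  ~~ is_det i -> ~~ is_long i -> completion inst sigma_blk i <= 1.
Proof.
move=> fixed_i short_i; have i_lt := ltn_ord i.
have short_len x : ~~ is_det x -> ~~ is_long x -> fixed_len x = (m%:R)^-1.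
  by rewrite /fixed_len => _ /negbTE ->.
rewrite completionE // /start_time proc_fixed // short_len //.
rewrite (@run_const _ _ _ _ _ (m%:R)^-1) => [|x /earlier_blkP [same_x x_lt] u].
  rewrite add0r -[X in _ + X]mul1r -mulrDl natr1.
  rewrite ler_pdivrMr ?ltr0n ?m_gt0 // mul1r ler_nat; exact: size_earlier_blk.
have x_fixed : ~~ is_det x.
  by rewrite /is_det -leqNgt -(divn_gt0 _ m_gt0) same_x divn_gt0 ?m_gt0 // leqNgt.
rewrite proc_fixed ?short_len //.
by rewrite /is_long; apply/negP => /eqP x_long; move: i_lt x_lt; rewrite x_long; lia.
Qed.

Lemma makespan_blk_le : makespan inst sigma_blk <= 1 + eps / 3.
Proof.
apply: bigmax_le => [|i _]; first by move: eps_gt0 => ?; lra.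
have [det_i | fixed_i] := boolP (is_det i); first exact: completion_blk_det.
have [long_i | short_i] := boolP (is_long i).
  have -> : i = long_job by apply/ord_inj/eqP.
  by rewrite completion_blk_long; move: eps_gt0 => ?; lra.
by apply: le_trans (completion_blk_short fixed_i short_i) _; move: eps_gt0 => ?; lra.
Qed.

End TightInstance.

Lemma tight_ratio_le (F : realFieldType) (c e o M : F) :
  0 <= c <= 2 -> 0 <= e < 1 -> o <= 1 + e / 3 -> 3 - c <= M -> (3 - c - e) * o <= M.
Proof.
move=> /andP [c_ge0 c_le2] /andP [e_ge0 e_lt1] o_le M_ge.
have : (3 - c - e) * (1 + e / 3 - o) >= 0 by apply: mulr_ge0; lra.
nra.
Qed.

Theorem theorem15 (R : realType) (eps : R) (m : nat) :
  0 < eps -> eps < 1 -> (2 <= m)%N ->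
  exists (n : nat) (G : game R n m) (sigma : {ffun 'I_n -> 'I_m}),
    [/\ (0 < n)%N,
        (forall j : 'I_m, speed G j = 1),
        (forall i : 'I_n, [/\ 0 < tau G i, 0 <= bb G i & 0 <= aa G i <= 1]),
        is_NE G sigma &
        exists opt : R, is_OPT G opt /\
          (3 - 2 / m%:R - eps) * opt <= makespan G sigma].
Proof.
move=> eps_gt0 eps_lt1 m_ge2.
exists (m * (m - 1)).+1, (inst m eps), (sigma_rr m_ge2); split => //.
- exact: inst_params.
- exact: sigma_rr_NE.
have [opt [opt_OPT opt_le]] := exists_OPT (inst m eps) (sigma_blk m_ge2).
exists opt; split => //.
apply: tight_ratio_le (makespan_rr_ge m_ge2 eps_gt0 eps_lt1).
- have m_gt0 : (0 : R) < m%:R by rewrite ltr0n; lia.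
  by rewrite divr_ge0 ?ler0n //= ler_pdivrMr // ler_pMr ?ler1n //; lia.
- by rewrite ltW.
- exact: le_trans opt_le (makespan_blk_le m_ge2 eps_gt0 eps_lt1).
Qed.
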